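(* Let $\alpha>0$ and let $u:[0,1]\to\mathbb R$ be any function with $u(0)=u(1)=0$ satisfying $u(1-x)+(1-x)^\alpha u\!\left(\tfrac{y}{1-x}\right)=u(y)+(1-y)^\alpha u\!\left(\tfrac{1-x-y}{1-y}\right)$ for all $x,y\in[0,1)$ with $x+y\in[0,1]$. Then $u(x)=u(1-x)$ for all $x\in\mathbb Q\cap[0,1]$. *)

From Stdlib Require Export Reals.
Open Scope R_scope.

Definition is_rational (x : R) : Prop :=
  exists (p : Z) (q : positive), x = IZR p / IZR (Zpos q).

(** Write [V n] for the value that the equation forces on the uniform
    distribution on [n] points, built by splitting off one point at a time.
    Induction on [k], using the equation once per step, shows that splitting
    the [n] points instead into blocks of sizes [k] and [n - k] gives
    [V n = u (k/n) + (k/n)^alpha V k + ((n-k)/n)^alpha V (n-k)].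
    This expression is symmetric in [k] and [n - k] apart from the term
    [u (k/n)], hence [u (k/n) = u ((n-k)/n)]. *)

From Stdlib Require Import Reals ZArith Lra Lia.
Open Scope R_scope.

Lemma Rpower_div_mul (a b c p : R) : 0 < a -> 0 < b -> 0 < c ->
  Rpower (a / b) p * Rpower (b / c) p = Rpower (a / c) p.
Proof.
  intros Ha Hb Hc.
  rewrite Rpower_mult_distr by (apply Rdiv_lt_0_compat; assumption).
  f_equal; field; lra.
Qed.

Lemma rational_unit_interval_frac (x : R) : is_rational x -> 0 <= x <= 1 ->
  exists k n : nat, (0 < n)%nat /\ (k <= n)%nat /\ x = INR k / INR n.
Proof.
  intros [p [q ->]] Hx.
  assert (Hq : 0 < IZR (Z.pos q)) by (apply IZR_lt; lia).
  assert (Hp : (0 <= p <= Z.pos q)%Z).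
  { assert (IZR p = IZR p / IZR (Z.pos q) * IZR (Z.pos q)) by (field; lra).
    split; apply le_IZR; nra. }
  exists (Z.to_nat p), (Pos.to_nat q).
  rewrite !INR_IZR_INZ, Z2Nat.id, positive_nat_Z by lia.
  repeat split; lia.
Qed.

Section UniformSplitting.

Variables (al : R) (u : R -> R).

Hypothesis u1 : u 1 = 0.

Hypothesis fe : forall x y : R, 0 <= x < 1 -> 0 <= y < 1 -> 0 <= x + y <= 1 ->
  u (1 - x) + Rpower (1 - x) al * u (y / (1 - x))
  = u y + Rpower (1 - y) al * u ((1 - x - y) / (1 - y)).

Fixpoint V (n : nat) : R :=
  match n with
  | O => 0
  | S m => u (1 / INR (S m)) + Rpower (INR m / INR (S m)) al * V m
  end.

Lemma V_S (m : nat) :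
  V (S m) = u (1 / INR (S m)) + Rpower (INR m / INR (S m)) al * V m.
Proof. reflexivity. Qed.

Lemma V_1 : V 1 = 0.
Proof. rewrite V_S; cbn [V INR]. rewrite Rdiv_1_r, u1; ring. Qed.

(* The equation at [x = J/N], [y = K/N] with [N = K + 1 + J]. *)
Lemma fe_grid (K J : R) : 0 <= K -> 0 <= J ->
  u ((K + 1) / (K + 1 + J)) + Rpower ((K + 1) / (K + 1 + J)) al * u (K / (K + 1))
  = u (K / (K + 1 + J)) + Rpower ((J + 1) / (K + 1 + J)) al * u (1 / (J + 1)).
Proof.
  intros HK HJ.
  assert (HN : 0 < K + 1 + J) by lra.
  assert (HiN : 0 < / (K + 1 + J)) by (apply Rinv_0_lt_compat; lra).
  assert (HNiN : (K + 1 + J) * / (K + 1 + J) = 1) by (field; lra).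
  assert (Hfe := fe (J / (K + 1 + J)) (K / (K + 1 + J))).
  specialize (Hfe ltac:(split; nra) ltac:(split; nra) ltac:(split; nra)).
  replace (1 - J / (K + 1 + J)) with ((K + 1) / (K + 1 + J)) in Hfe by (field; lra).
  replace (1 - K / (K + 1 + J)) with ((J + 1) / (K + 1 + J)) in Hfe by (field; lra).
  replace (K / (K + 1 + J) / ((K + 1) / (K + 1 + J))) with (K / (K + 1)) in Hfe
    by (field; lra).
  replace (((K + 1) / (K + 1 + J) - K / (K + 1 + J)) / ((J + 1) / (K + 1 + J)))
    with (1 / (J + 1)) in Hfe by (field; lra).
  exact Hfe.
Qed.

Lemma V_split (k n : nat) : (1 <= k < n)%nat ->
  V n = u (INR k / INR n) + Rpower (INR k / INR n) al * V k
        + Rpower (INR (n - k) / INR n) al * V (n - k).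
Proof.
  revert n; induction k as [|k IHk]; intros n Hkn; [lia|].
  destruct (Nat.eq_dec k 0) as [-> | Hk0].
  - destruct n as [|m]; [lia|].
    rewrite V_1, (V_S m).
    replace (S m - 1)%nat with m by lia.
    change (INR 1) with 1; ring.
  - rewrite (IHk n), (IHk (S k)) by lia.
    set (j := (n - S k)%nat).
    replace (n - k)%nat with (S j) by lia.
    replace (S k - k)%nat with 1%nat by lia.
    assert (Hn : INR n = INR k + 1 + INR j).
    { replace n with (S k + j)%nat by lia. rewrite plus_INR, S_INR; ring. }
    rewrite V_1, (V_S j).
    rewrite !S_INR, Hn.
    assert (HK : 0 < INR k) by (apply lt_0_INR; lia).
    assert (HJ : 0 < INR j) by (apply lt_0_INR; lia).
    assert (Hfe := fe_grid (INR k) (INR j) ltac:(lra) ltac:(lra)).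
    rewrite <- (Rpower_div_mul (INR k) (INR k + 1) (INR k + 1 + INR j)) by lra.
    rewrite <- (Rpower_div_mul (INR j) (INR j + 1) (INR k + 1 + INR j)) by lra.
    lra.
Qed.

Hypothesis u0 : u 0 = 0.

Lemma u_frac_symm (k n : nat) : (0 < n)%nat -> (k <= n)%nat ->
  u (INR k / INR n) = u (INR (n - k) / INR n).
Proof.
  intros Hn Hkn.
  assert (HnR : 0 < INR n) by (apply lt_0_INR; lia).
  destruct (Nat.eq_dec k 0) as [-> | Hk0].
  { rewrite Nat.sub_0_r; cbn [INR].
    rewrite Rdiv_0_l, Rdiv_diag by lra; congruence. }
  destruct (Nat.eq_dec k n) as [-> | Hkn'].
  { rewrite Nat.sub_diag; cbn [INR].
    rewrite Rdiv_0_l, Rdiv_diag by lra; congruence. }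
  assert (Hsplit := V_split k n ltac:(lia)).
  assert (Hsplit' := V_split (n - k) n ltac:(lia)).
  replace (n - (n - k))%nat with k in Hsplit' by lia.
  lra.
Qed.

End UniformSplitting.

Theorem propositionC2 (alpha : R) (u : R -> R) :
  0 < alpha ->
  u 0 = 0 -> u 1 = 0 ->
  (forall x y : R, 0 <= x < 1 -> 0 <= y < 1 -> 0 <= x + y <= 1 ->
     u (1 - x) + Rpower (1 - x) alpha * u (y / (1 - x))
     = u y + Rpower (1 - y) alpha * u ((1 - x - y) / (1 - y))) ->
  forall x : R, is_rational x -> 0 <= x <= 1 -> u x = u (1 - x).
Proof.
  intros _ u0 u1 fe x Hx Hx01.
  destruct (rational_unit_interval_frac x Hx Hx01) as (k & n & Hn & Hkn & ->).
  rewrite (u_frac_symm alpha u u1 fe u0 k n Hn Hkn).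
  f_equal.
  assert (0 < INR n) by (apply lt_0_INR; lia).
  rewrite minus_INR by lia.
  field; lra.
Qed.
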